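(* Let $q$ be an odd prime power, let $f$ be a normal planar function on $\mathbb F_{q^2}$, and let $\theta\in\mathbb F_{q^2}^*$ satisfy: for every $c\in\mathbb F_q$, $\#\{x\in\mathbb F_{q^2}:\theta_1f_0(x)-\theta_0f_1(x)=c\}$ equals $q+1$ if $c\neq0$ and $1$ if $c=0$ (so that $\mathcal U_\theta:=\{(x,t\theta):x\in\mathbb F_{q^2},t\in\mathbb F_q\}\cup\{(\infty)\}$ is a unital in $\Pi(f)$). Then for each $c\in\mathbb F_{q^2}$ the set \[\mathcal O_c:=\{(x,c):x\in\mathbb F_{q^2}\}\cup\{(\infty)\}\] is an oval in $\Pi(f)$, and $\mathcal U_\theta=\bigcup_{t\in\mathbb F_q}\mathcal O_{t\theta}$ is a union of ovals.
   Context: A function $f:\mathbb F_{q^2}\to\mathbb F_{q^2}$ is planar if for every $a\neq0$ the map $x\mapsto f(x+a)-f(x)$ is a bijection; it is a normal planar function if moreover $f(0)=0$ and, for all $a,b$, $f(a)=f(b)$ iff $a=\pm b$. For planar $f$, $\Pi(f)$ is the projective plane with points $(x,y)\in\mathbb F_{q^2}^2$ and $(a)$ for $a\in\mathbb F_{q^2}\cup\{\infty\}$, and lines $L_{a,b}=\{(x,f(x+a)-b):x\in\mathbb F_{q^2}\}\cup\{(a)\}$, $N_a=\{(a,y):y\in\mathbb F_{q^2}\}\cup\{(\infty)\}$ ($a,b\in\mathbb F_{q^2}$), $L_\infty=\{(a):a\in\mathbb F_{q^2}\cup\{\infty\}\}$, incidence being membership. A unital is a set of $q^3+1$ points meeting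 every line in $1$ or $q+1$ points. An oval in a projective plane of odd order $N$ is a set of $N+1$ points meeting every line in $0$, $1$ or $2$ points. A fixed $\xi\in\mathbb F_{q^2}\setminus\mathbb F_q$ is chosen; elements are written $\theta=\theta_0+\theta_1\xi$ and $f(x)=f_0(x)+f_1(x)\xi$ with $\theta_i\in\mathbb F_q$, $f_i(x)\in\mathbb F_q$. *)

From HB Require Import structures.
From mathcomp Require Import all_boot all_order all_algebra all_field.
Set Implicit Arguments. Unset Strict Implicit. Unset Printing Implicit Defensive.
Import GRing.Theory.
Local Open Scope ring_scope.

(* Points of Pi(f): inl (x,y) is the affine point (x,y);
   inr (Some a) is the point (a), inr None is the point (infinity). *)
Definition point (F : finFieldType) := ((F * F) + option F)%type.
(* Lines of Pi(f): inl (a,b) is L_{a,b}; inr (inl a) is N_a; inr (inr tt) is L_infinity. *)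
Definition line (F : finFieldType) := ((F * F) + (F + unit))%type.

Definition incident (F : finFieldType) (f : F -> F) (P : point F) (l : line F) : bool :=
  match l, P with
  | inl (a, b), inl (x, y) => y == f (x + a) - b
  | inl (a, b), inr (Some a') => a' == a
  | inl _, inr None => false
  | inr (inl a), inl (x, _) => x == a
  | inr (inl _), inr (Some _) => false
  | inr (inl _), inr None => true
  | inr (inr _), inl _ => false
  | inr (inr _), inr _ => true
  end.

Definition planar (F : finFieldType) (f : F -> F) : Prop :=
  forall a : F, a != 0 -> bijective (fun x => f (x + a) - f x).

Definition normal_planar (F : finFieldType) (f : F -> F) : Prop :=
  [/\ planar f, f 0 = 0 & forall a b : F, f a = f b <-> (a = b \/ a = - b)].

Definition is_oval (F : finFieldType) (f : F -> F) (N : nat) (S : {set point F}) : Prop :=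
  #|S| = N.+1 /\ forall l : line F, (#|[set P in S | incident f P l]| <= 2)%N.

Definition O_set (F : finFieldType) (c : F) : {set point F} :=
  [set P : point F | match P with
                     | inl (_, y) => y == c
                     | inr None => true
                     | inr (Some _) => false end].

Definition U_set (F : finFieldType) (q : nat) (theta : F) : {set point F} :=
  [set P : point F | match P with
                     | inl (_, y) => [exists t : F, (t ^+ q == t) && (y == t * theta)]
                     | inr None => true
                     | inr (Some _) => false end].

From HB Require Import structures.
From mathcomp Require Import all_boot all_order all_algebra all_field.
Import GRing.Theory.
Local Open Scope ring_scope.

(** Only the normality of [f] matters for the ovals: a line [L_{a,b}] meets
    [O_c] in the points [(x, c)] with [f (x + a) = c + b], and [f] takes the
    value [f z] only at [z] and [-z].  The hypotheses on [q], [xi] and [theta] are needed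
    for [U_theta] to be a unital, not for the two claims proved here. *)

Lemma card_le2_sub2 (T : finType) (S : {set T}) (u v : T) :
  S \subset [set u; v] -> (#|S| <= 2)%N.
Proof.
move=> sSuv; apply: leq_trans (subset_leq_card sSuv) _.
by rewrite cards2; case: (u != v).
Qed.

Section Ovals.

Variables (F : finFieldType) (f : F -> F).
Hypothesis f_eq_opp : forall a b : F, f a = f b <-> (a = b \/ a = - b).

Lemma O_setE (c : F) : O_set c = inr None |: [set inl (x, c) | x : F].
Proof.
apply/setP => -[[x y]|[a|]]; rewrite !inE //=.
- apply/eqP/imsetP => [->|[x' _ [_ ->]]] //; by exists x.
- by apply/esym/imsetP => -[].
Qed.

Lemma card_O_set (c : F) : #|O_set c| = #|F|.+1.
Proof.
rewrite O_setE cardsU1 card_imset; last by move=> x1 x2 [].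
suff -> : (inr None \in [set (inl (x, c) : point F) | x : F]) = false by [].
by apply/imsetP => -[].
Qed.

Lemma shifted_fiber_sub2 {a d x0 x : F} :
  f (x0 + a) = d -> f (x + a) = d -> x = x0 \/ x = - (x0 + a) - a.
Proof.
move=> <- /f_eq_opp [/addIr|<-]; first by left.
by right; rewrite addrK.
Qed.

Lemma O_set_line_sub2 (c : F) (l : line F) :
  exists u v, [set P in O_set c | incident f P l] \subset [set u; v].
Proof.
case: l => [[a b]|[a|[]]].
- case: (pickP (fun x => f (x + a) == c + b)) => [x0 /eqP fx0|no_x].
    exists (inl (x0, c)), (inl (- (x0 + a) - a, c)).
    apply/subsetP => -[[x y]|[a'|]]; rewrite !inE //= => /andP[/eqP -> /eqP fx].
    have fx' : f (x + a) = c + b by rewrite fx subrK.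
    have [->|->] := shifted_fiber_sub2 fx0 fx'.
      by rewrite eqxx.
    by rewrite eqxx orbT.
  exists (inr None), (inr None).
  apply/subsetP => -[[x y]|[a'|]]; rewrite !inE //= => /andP[/eqP -> /eqP fx].
  by move: (no_x x); rewrite fx addrNK eqxx.
- exists (inl (a, c)), (inr None).
  apply/subsetP => -[[x y]|[a'|]]; rewrite !inE //=.
  by move=> /andP[/eqP -> /eqP ->]; rewrite eqxx.
- exists (inr None), (inr None).
  by apply/subsetP => -[[x y]|[a'|]]; rewrite !inE /= ?andbF.
Qed.

Lemma O_set_oval (c : F) : is_oval f #|F| (O_set c).
Proof.
split; first exact: card_O_set.
by move=> l; have [u [v]] := O_set_line_sub2 c l; apply: card_le2_sub2.
Qed.

End Ovals.

Lemma U_set_bigcup (F : finFieldType) (q : nat) (theta : F) : (0 < q)%N ->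
  U_set q theta = \bigcup_(t : F | t ^+ q == t) O_set (t * theta).
Proof.
move=> q_gt0; apply/setP => -[[x y]|[a|]]; rewrite inE /=.
- apply/existsP/bigcupP => [[t /andP[qt yt]]|[t qt]].
    by exists t; rewrite ?inE.
  by rewrite inE => /eqP ->; exists t; rewrite qt eqxx.
- by apply/esym/bigcupP => -[t _]; rewrite inE.
- apply/esym/bigcupP; exists 0; last by rewrite inE.
  by rewrite expr0n eqn0Ngt q_gt0.
Qed.

Theorem proposition3p1
  (F : finFieldType) (q : nat)
  (hq : exists p k : nat, [/\ prime p, (0 < k)%N & q = (p ^ k)%N])
  (hodd : odd q)
  (hF : #|F| = (q ^ 2)%N)
  (xi : F) (hxi : xi ^+ q != xi)
  (f f0 f1 : F -> F) (hf : normal_planar f)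
  (hf01 : forall x, [/\ f0 x ^+ q = f0 x, f1 x ^+ q = f1 x & f x = f0 x + f1 x * xi])
  (theta theta0 theta1 : F) (htheta : theta != 0)
  (htheta01 : [/\ theta0 ^+ q = theta0, theta1 ^+ q = theta1 & theta = theta0 + theta1 * xi])
  (hcount : forall c : F, c ^+ q = c ->
      #|[set x : F | theta1 * f0 x - theta0 * f1 x == c]| = (if c != 0 then q.+1 else 1%N)) :
  (forall c : F, is_oval f (q ^ 2) (O_set c)) /\
  U_set q theta = \bigcup_(t : F | t ^+ q == t) O_set (t * theta).
Proof.
have [_ _ f_eq_opp] := hf.
have q_gt0 : (0 < q)%N by rewrite lt0n; apply: contraTneq hodd => ->.
split; last exact: U_set_bigcup.
by move=> c; rewrite -hF; exact: O_set_oval f_eq_opp c.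
Qed.
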